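(* Let $G$ be a finite group, let $H$ be a subgroup of $G$ with $[G:H]=r$, and let $D$ be a $(v,k,\lambda)$-difference set in $G$ with order $n=k-\lambda$. Suppose that some coset of $H$ contains exactly $s$ elements of $D$. Then \[ \left| s - \frac{k}{r} \right| \leq \sqrt{n}\,\frac{r-1}{r}. \]
   Context: For a finite group $G$ of order $v$ and a $k$-subset $D\subseteq G$ with $k\ge 1$, identify $D$ with the group ring element $\sum_{d\in D} d\in\mathbb{Z}G$, and for $a=\sum a_i g_i\in\mathbb{Z}G$ put $a^{(-1)}=\sum a_i g_i^{-1}$. $D$ is a $(v,k,\lambda)$-difference set in $G$ if $DD^{(-1)}=\lambda G+n\cdot 1$ in $\mathbb{Z}G$, where $n=k-\lambda$ (the order of $D$); equivalently every non-identity element of $G$ can be written as $d_1d_2^{-1}$ with $d_1,d_2\in D$ in exactly $\lambda$ ways. *)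

From mathcomp Require Import all_boot all_order all_algebra all_fingroup.
Set Implicit Arguments. Unset Strict Implicit. Unset Printing Implicit Defensive.
Import GroupScope.

Definition difference_set (gT : finGroupType) (G : {group gT}) (D : {set gT})
    (v k lambda : nat) : Prop :=
  [/\ D \subset G, #|G| = v, #|D| = k, (1 <= k)%N &
      forall g, g \in G -> g != 1 ->
        #|[set p in setX D D | p.1 * p.2^-1 == g]| = lambda].

(* Let a_C = #|D :&: C| for the r right cosets C of H.  Counting pairs in D x D
   by their quotient d1 d2^-1 gives sum a_C = k and
   sum a_C^2 = #{(d1, d2) | d1 d2^-1 \in H} = k + lambda (#|H| - 1), which together
   with k^2 = k + lambda (v - 1) says that r sum a_C^2 = k^2 + (r - 1) n.
   Cauchy-Schwarz over the remaining r - 1 cosets then bounds the deviation of a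
   single a_C from the mean k / r. *)

From mathcomp Require Import all_boot all_order all_algebra all_fingroup.
From mathcomp Require Import ring.
Local Open Scope ring_scope.
Import Order.TTheory GRing.Theory Num.Theory.

Lemma sqr_sum_le_card_sum_sqr {R : realDomainType} {I : finType} (A : {set I})
    (x : I -> R) :
  (\sum_(i in A) x i) ^+ 2 <= #|A|%:R * \sum_(i in A) x i ^+ 2.
Proof.
set m : R := #|A|%:R; set S := \sum_(i in A) x i.
have variance : \sum_(i in A) (m * x i - S) ^+ 2 = m * (m * \sum_(i in A) x i ^+ 2 - S ^+ 2).
  rewrite (eq_bigr (fun i => m ^+ 2 * x i ^+ 2 - 2 * m * S * x i + S ^+ 2));
    last by move=> i _; ring.
  rewrite big_split sumrB /= -!mulr_sumr sumr_const -/S -/m -mulr_natl; ring.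
have [/cards0_eq A0 | A_gt0] := posnP #|A|.
  by rewrite /S /m A0 cards0 big_set0 expr2 !mul0r.
have : 0 <= m * (m * \sum_(i in A) x i ^+ 2 - S ^+ 2).
  by rewrite -variance; apply: sumr_ge0 => i _; apply: sqr_ge0.
by rewrite pmulr_rge0 ?subr_ge0 // /m ltr0n.
Qed.

(* The hypothesis on the sum of squares fixes the variance of the family to
   (r - 1) n / r^2; no single entry can then stray further than sqrt n (r - 1) / r. *)
Lemma entry_mean_deviation_le {R : rcfType} {I : finType} {T : {set I}} (a : I -> R)
    {c : I} {r : nat} {k n : R} :
  c \in T -> #|T| = r -> \sum_(i in T) a i = k ->
  r%:R * \sum_(i in T) a i ^+ 2 = k ^+ 2 + (r%:R - 1) * n ->
  `|a c - k / r%:R| <= Num.sqrt n * ((r%:R - 1) / r%:R).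
Proof.
move=> cT cardT sum_a sum_sqr.
have r_gt0 : (0 < r)%N by rewrite -cardT card_gt0; apply/set0Pn; exists c.
have r1_ge0 : 0 <= r%:R - 1 :> R by rewrite subr_ge0 ler1n.
have card_rest : #|T :\ c|%:R = r%:R - 1 :> R.
  by rewrite -cardT (cardsD1 c T) cT add1n -addn1 natrD addrK.
have cs_rest := sqr_sum_le_card_sum_sqr (T :\ c) a.
rewrite card_rest !(big_setD1 c cT) /= in cs_rest sum_a sum_sqr.
set w := r%:R * a c - k.
have w_sqr : w ^+ 2 <= (r%:R - 1) ^+ 2 * n.
  rewrite -subr_ge0; move: cs_rest; rewrite -subr_ge0 => cs_rest.
  have -> : (r%:R - 1) ^+ 2 * n - w ^+ 2 =
      r%:R * ((r%:R - 1) * \sum_(i in T :\ c) a i ^+ 2 - (\sum_(i in T :\ c) a i) ^+ 2).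
    have n_r1 : (r%:R - 1) * n =
        r%:R * (a c ^+ 2 + \sum_(i in T :\ c) a i ^+ 2) - (a c + \sum_(i in T :\ c) a i) ^+ 2.
      by rewrite sum_sqr sum_a addrAC subrr add0r.
    by rewrite /w -sum_a expr2 -mulrA n_r1; ring.
  by rewrite mulr_ge0 ?ler0n.
have -> : a c - k / r%:R = w / r%:R by rewrite /w; field; rewrite pnatr_eq0 -lt0n.
rewrite normrM normfV normr_nat mulrA ler_pM2r ?invr_gt0 ?ltr0n //.
rewrite -sqrtr_sqr -[r%:R - 1]ger0_norm // -sqrtr_sqr mulrC -sqrtrM ?sqr_ge0 //.
exact: ler_wsqrtr.
Qed.

Local Open Scope group_scope.

Definition quotient_pairs {gT : finGroupType} (D A : {set gT}) :=
  [set p in setX D D | p.1 * p.2^-1 \in A].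

Lemma card_quotient_pairs_fibres (gT : finGroupType) (D A : {set gT}) :
  #|quotient_pairs D A| = (\sum_(h in A) #|quotient_pairs D [set h]|)%N.
Proof.
rewrite -sum1_card (partition_big (fun p => p.1 * p.2^-1) (mem A)) /=; last first.
  by move=> p; rewrite inE => /andP[].
apply: eq_bigr => h Ah; rewrite sum1dep_card; apply: eq_card => p.
by rewrite !inE; case: eqP => [-> | _]; rewrite ?Ah ?andbT ?andbF.
Qed.

Lemma card_quotient_pairs1 (gT : finGroupType) (D : {set gT}) :
  #|quotient_pairs D [set 1]| = #|D|.
Proof.
rewrite -(card_imset D (f := fun d => (d, d))); last by move=> x y [].
apply: eq_card => -[x y]; rewrite !inE /= -eq_mulgV1.
apply/idP/imsetP => [/andP[/andP[Dx _] /eqP <-] | [d Dd [-> ->]]]; first by exists x.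
by rewrite Dd eqxx.
Qed.

Section RightCosets.

Context {gT : finGroupType} {G H : {group gT}} {D : {set gT}}.
Hypothesis sDG : D \subset G.

Lemma mem_rcosets_eq d {C} : C \in rcosets H G -> (d \in C) = (H :* d == C).
Proof. by case/rcosetsP=> x _ ->; apply/idP/eqP=> [/rcoset_eqP | <-]; rewrite ?rcoset_refl. Qed.

Lemma rcoset_in_rcosets {x} : x \in G -> H :* x \in rcosets H G.
Proof. by move=> Gx; apply/rcosetsP; exists x. Qed.

Lemma sum_card_setI_rcosets : (\sum_(C in rcosets H G) #|D :&: C|)%N = #|D|.
Proof.
rewrite -[RHS]sum1_card (partition_big (fun d => H :* d) (mem (rcosets H G))) /=; last first.
  by move=> d Dd; apply/rcoset_in_rcosets/(subsetP sDG).
apply: eq_bigr => C GC; rewrite sum1dep_card; apply: eq_card => d.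
by rewrite !inE (mem_rcosets_eq d GC).
Qed.

Lemma sum_sqr_card_setI_rcosets :
  (\sum_(C in rcosets H G) #|D :&: C| ^ 2)%N = #|quotient_pairs D H|.
Proof.
rewrite -[RHS]sum1_card
  (partition_big (fun p => H :* p.1) (mem (rcosets H G))) /=; last first.
  by move=> p; rewrite !inE => /andP[/andP[Dx _] _]; apply/rcoset_in_rcosets/(subsetP sDG).
apply: eq_bigr => C GC; rewrite sum1dep_card -mulnn -cardsX; apply: eq_card => -[x y].
rewrite !inE /= !(mem_rcosets_eq _ GC); case: eqP => [<- | _]; last by rewrite !andbF.
by rewrite eq_sym (sameP eqP rcoset_eqP) mem_rcoset !andbT andbA.
Qed.

End RightCosets.

Section DifferenceSet.

Context {gT : finGroupType} {G : {group gT}} {D : {set gT}} {v k lambda : nat}.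
Hypothesis difD : difference_set G D v k lambda.

Lemma card_quotient_pairs_subgroup {K : {group gT}} :
  K \subset G -> (#|quotient_pairs D K| + lambda = k + lambda * #|K|)%N.
Proof.
move=> sKG; have [_ _ cardD _ fibres] := difD.
rewrite card_quotient_pairs_fibres (bigD1 1) //= card_quotient_pairs1 cardD.
rewrite (eq_bigr (fun _ => lambda)); last first.
  move=> h /andP[Kh nt_h]; rewrite -(fibres h) ?(subsetP sKG) //.
  by apply: eq_card => p; rewrite !inE.
rewrite sum_nat_const (cardsD1 1 K) group1.
have -> : #|[pred h in K | h != 1]| = #|K :\ 1| by apply: eq_card => h; rewrite !inE andbC.
by rewrite mulnC mulnDr muln1 addnAC addnA.
Qed.

Lemma card_quotient_pairs_group : #|quotient_pairs D G| = (k * k)%N.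
Proof.
have [sDG _ cardD _ _] := difD.
rewrite -cardD -cardsX; apply: eq_card => -[x y]; rewrite !inE /=.
by case: (x \in D) (y \in D) (subsetP sDG x) (subsetP sDG y) => [] [] // Gx Gy;
  rewrite groupM ?groupV ?Gx ?Gy.
Qed.

End DifferenceSet.

Lemma lcoset_rcosetJ (gT : finGroupType) (H : {set gT}) (x : gT) :
  x *: H = (H :^ x^-1) :* x.
Proof. by apply/setP=> y; rewrite mem_lcoset mem_rcoset mem_conjgV conjgE mulgKV. Qed.

Local Close Scope group_scope.

Lemma rcoset_meet_deviation_le (R : rcfType) {gT : finGroupType} {G H : {group gT}}
    {D : {set gT}} {v k lambda r : nat} {x : gT} :
  H \subset G -> #|G : H|%g = r -> difference_set G D v k lambda -> x \in G ->
  `|(#|D :&: (H :* x)|%g%:R - k%:R / r%:R : R)| <=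
    Num.sqrt (k%:R - lambda%:R : R) * ((r%:R - 1) / r%:R).
Proof.
move=> sHG indexGH difD Gx; have [sDG _ cardD _ _] := difD.
apply: (entry_mean_deviation_le (fun C => #|D :&: C|%:R) (rcoset_in_rcosets Gx) indexGH).
  by rewrite -natr_sum sum_card_setI_rcosets // cardD.
under eq_bigr do rewrite -natrX.
rewrite -natr_sum sum_sqr_card_setI_rcosets //.
have := congr1 (fun m => m%:R : R) (card_quotient_pairs_subgroup difD sHG).
have := congr1 (fun m => m%:R : R) (card_quotient_pairs_subgroup difD (subxx G)).
rewrite /= (card_quotient_pairs_group difD) -(Lagrange sHG) indexGH !natrD !natrM.
move=> /(canRL (addrK _)) sqr_k /(canRL (addrK _)) ->.
by rewrite expr2 sqr_k; ring.
Qed.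

Theorem theorem1p1 (R : rcfType) (gT : finGroupType) (G H : {group gT})
    (D : {set gT}) (v k lambda r s : nat) :
  H \subset G -> (#|G : H|)%g = r ->
  difference_set G D v k lambda ->
  (exists2 x, x \in G &
     (#|D :&: (x *: H)|)%g = s \/ (#|D :&: (H :* x)|)%g = s) ->
  `|(s%:R - k%:R / r%:R : R)| <=
    Num.sqrt (k%:R - lambda%:R : R) * ((r%:R - 1) / r%:R).
Proof.
move=> sHG indexGH difD [x Gx [<- | <-]];
  last exact: (rcoset_meet_deviation_le R sHG indexGH difD Gx).
have Gx' : (x^-1 \in G)%g by rewrite groupV.
have sHxG : (H :^ x^-1)%G \subset G by rewrite -(conjGid Gx') conjSg.
have indexGHx : #|G : (H :^ x^-1)%G|%g = r by rewrite -{1}(conjGid Gx') indexJg.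
by rewrite lcoset_rcosetJ; exact: (rcoset_meet_deviation_le R sHxG indexGHx difD Gx).
Qed.
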